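(* Let $\{a_n\}_{n\ge 0}$ be a sequence of positive real numbers. Suppose there are real numbers $c>0$ and $0<\alpha\le\beta$ such that $\mathscr{R}^2 a_n = a_na_{n+2}/a_{n+1}^2$ has a Puiseux-type approximation of the form \[ \mathscr{R}^2 a_n = 1+\frac{c}{n^{\alpha}}+\cdots+o\!\left(\frac{1}{n^{\beta}}\right), \] i.e. there exist an integer $m\ge 1$, real exponents $\alpha=\alpha_1<\alpha_2<\cdots<\alpha_m$ and real coefficients $c_1=c,c_2,\dots,c_m$ such that $\lim_{n\to\infty} n^{\beta}\bigl(\mathscr{R}^2a_n-1-\sum_{i=1}^m c_i n^{-\alpha_i}\bigr)=0$. Then $\{a_n\}_{n\ge0}$ is asymptotically $r$-log-convex for \[ r=\begin{cases}\lfloor \beta/\alpha\rfloor, & \text{if } \alpha<2,\\[3pt] \left\lfloor \frac{\beta-\alpha}{2}\right\rfloor+1, & \text{if } \alpha\ge 2.\end{cases} \]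
   Context: $\mathscr{L}a_n=a_na_{n+2}-a_{n+1}^2$ and $\mathscr{L}^k a_n=\mathscr{L}(\mathscr{L}^{k-1}a_n)$. A sequence is $r$-log-convex if $\{\mathscr{L}a_n\},\{\mathscr{L}^2a_n\},\dots,\{\mathscr{L}^r a_n\}$ are all nonnegative sequences; it is asymptotically $r$-log-convex if there is $N$ such that $\mathscr{L}^k a_n\ge 0$ for all $k=1,\dots,r$ and all $n\ge N$. A Puiseux-type approximation of $f_n$ is $g_n=\sum_{i=0}^m c_i n^{-\alpha_i}$ ($\alpha_0<\cdots<\alpha_m$) with $n^{\alpha_m}(f_n-g_n)\to 0$; trailing terms are abbreviated with little-o notation. $\lfloor x\rfloor$ is the floor of $x$. *)

From Stdlib Require Import Reals.
From Coquelicot Require Import Coquelicot.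
Open Scope R_scope.

Definition Lop (a : nat -> R) : nat -> R :=
  fun n => a n * a (n + 2)%nat - (a (n + 1)%nat) ^ 2.

Fixpoint Liter (k : nat) (a : nat -> R) : nat -> R :=
  match k with
  | O => a
  | S k' => Lop (Liter k' a)
  end.

Definition asymp_r_log_convex (r : nat) (a : nat -> R) : Prop :=
  exists N : nat, forall k n : nat, (1 <= k <= r)%nat -> (N <= n)%nat ->
    0 <= Liter k a n.

Definition R2 (a : nat -> R) (n : nat) : R :=
  a n * a (n + 2)%nat / (a (n + 1)%nat) ^ 2.

(* floor of a real, as an integer: Int_part x = up x - 1 = floor x *)
Definition Rfloor (x : R) : Z := Int_part x.

Definition r_of (alpha beta : R) : nat :=
  if Rlt_dec alpha 2 then Z.to_nat (Rfloor (beta / alpha))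
  else (Z.to_nat (Rfloor ((beta - alpha) / 2)) + 1)%nat.

From Stdlib Require Import Reals Lra Lia List ZArith.
From Coquelicot Require Import Coquelicot.
Open Scope R_scope.

(* Write x_n = R^2 a_n - 1 = l_n + o(n^(-beta)), where l_n = c n^(-alpha) + (higher
   powers of 1/n).  Then L a_n = a_(n+1)^2 x_n is eventually positive and
   R^2 (L a)_n = (1 + x_(n+1))^2 R^2 x_n.  Replacing x by l costs a relative error
   o(n^(alpha-beta)), and the model (1 + l_(n+1))^2 R^2 l_n - 1 again has a positive
   leading term, of exponent min(alpha, 2), since l_n l_(n+2) - l_(n+1)^2 ~ c^2 alpha
   n^(-2 alpha - 2).  So L a satisfies the hypothesis with (alpha, beta) replaced by
   (min(alpha, 2), beta - alpha), and the step can be repeated while the exponent does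
   not exceed the precision, that is, r times.  For the induction the models must be
   stable under shifts, products, inverses and differences: they are taken to be the
   sequences with asymptotic expansions in real powers of 1/n to every order,
   differences being expanded through (1 + 1/n)^(-e). *)

(** * Powers of n *)

Lemma eventually_ge (N : nat) : eventually (fun n => (N <= n)%nat).
Proof. exists N; auto. Qed.

Lemma eventually_shift (P : nat -> Prop) :
  eventually P -> eventually (fun n => P (S n)).
Proof. intros [N HN]; exists N; auto. Qed.

Definition npow (e : R) (n : nat) : R := Rpower (INR n) (- e).

Lemma npow_gt0 (e : R) (n : nat) : 0 < npow e n.
Proof. apply exp_pos. Qed.

Lemma npow_mul (e f : R) (n : nat) : npow e n * npow f n = npow (e + f) n.
Proof. unfold npow; rewrite <- Rpower_plus; f_equal; ring. Qed.

Lemma npow_0 (n : nat) : npow 0 n = 1.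
Proof. unfold npow, Rpower; rewrite Ropp_0, Rmult_0_l; apply exp_0. Qed.

Lemma npow_opp (e : R) (n : nat) : npow (- e) n = / npow e n.
Proof.
  apply (Rmult_eq_reg_l (npow e n)); [|apply Rgt_not_eq, npow_gt0].
  rewrite npow_mul, Rplus_opp_r, npow_0, Rinv_r; [reflexivity|apply Rgt_not_eq, npow_gt0].
Qed.

Lemma npow_antimono (e f : R) (n : nat) :
  (1 <= n)%nat -> e <= f -> npow f n <= npow e n.
Proof.
  intros Hn Hef; unfold npow; apply Rle_Rpower; [apply (le_INR 1), Hn|lra].
Qed.

Lemma npow_le1 (e : R) (n : nat) : (1 <= n)%nat -> 0 <= e -> npow e n <= 1.
Proof. intros; rewrite <- (npow_0 n); apply npow_antimono; auto. Qed.

Lemma npow_succ_le (e : R) (n : nat) :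
  (1 <= n)%nat -> 0 <= e -> npow e (S n) <= npow e n.
Proof.
  intros Hn He; unfold npow; rewrite !Rpower_Ropp.
  apply Rinv_le_contravar; [apply exp_pos|].
  apply Rle_Rpower_l; [lra|split; [apply (lt_INR 0)|apply le_INR]; lia].
Qed.

Lemma npow_vanish (g eps : R) :
  0 < g -> 0 < eps -> eventually (fun n => npow g n <= eps).
Proof.
  intros Hg Heps.
  destruct (INR_archimed 1 (exp (Rmax 0 (- ln eps / g)))) as [N HN]; [lra|].
  exists N; intros n Hn; unfold npow, Rpower.
  assert (HnN : INR N <= INR n) by (apply le_INR; lia).
  assert (Hlog : - ln eps / g < ln (INR n)).
  { eapply Rle_lt_trans; [apply (Rmax_r 0)|].
    rewrite <- (ln_exp (Rmax _ _)); apply ln_increasing; [apply exp_pos|lra]. }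
  rewrite <- (exp_ln eps Heps); apply Rlt_le, exp_increasing.
  apply (Rmult_lt_compat_l g) in Hlog; [|lra].
  replace (g * (- ln eps / g)) with (- ln eps) in Hlog by (field; lra); lra.
Qed.

Lemma npow_add_nat (e : R) (j n : nat) :
  (1 <= n)%nat -> npow (e + INR j) n = npow e n * (/ INR n) ^ j.
Proof.
  intros Hn; rewrite <- npow_mul; f_equal.
  unfold npow; rewrite Rpower_Ropp, Rpower_pow, pow_inv; [reflexivity|].
  apply (lt_INR 0); lia.
Qed.

Lemma npow_succ (e : R) (n : nat) :
  (1 <= n)%nat -> npow e (S n) = npow e n * Rpower (1 + / INR n) (- e).
Proof.
  intros Hn; assert (0 < INR n) by (apply (lt_INR 0); lia).
  assert (0 < / INR n) by (apply Rinv_0_lt_compat; auto).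
  unfold npow; rewrite Rpower_mult_distr by lra; f_equal.
  rewrite S_INR; field; lra.
Qed.

(** * Asymptotic expansions *)

Definition bigO (E : R) (u : nat -> R) : Prop :=
  exists C, eventually (fun n => Rabs (u n) <= C * npow E n).

Lemma bigO_normalize (E : R) (u : nat -> R) : bigO E u ->
  exists C, 0 <= C /\
    eventually (fun n => (1 <= n)%nat /\ Rabs (u n) <= C * npow E n).
Proof.
  intros [C HC]; exists (Rabs C); split; [apply Rabs_pos|].
  generalize (filter_and _ _ (eventually_ge 1) HC); apply filter_imp.
  intros n [Hn Hu]; split; [exact Hn|].
  eapply Rle_trans; [exact Hu|].
  apply Rmult_le_compat_r; [left; apply npow_gt0|apply Rle_abs].
Qed.

Lemma bigO_ext (E : R) (u v : nat -> R) :
  bigO E u -> eventually (fun n => u n = v n) -> bigO E v.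
Proof.
  intros [C HC] Huv; exists C.
  generalize (filter_and _ _ HC Huv); apply filter_imp; intros n [Hu <-]; exact Hu.
Qed.

Lemma bigO_mono (E F : R) (u : nat -> R) : bigO E u -> F <= E -> bigO F u.
Proof.
  intros Hu HFE; destruct (bigO_normalize _ _ Hu) as [C [HC HCu]]; exists C.
  generalize HCu; apply filter_imp; intros n [Hn Hun].
  eapply Rle_trans; [exact Hun|].
  apply Rmult_le_compat_l; [exact HC|apply npow_antimono; auto].
Qed.

Lemma bigO_add (E : R) (u v : nat -> R) :
  bigO E u -> bigO E v -> bigO E (fun n => u n + v n).
Proof.
  intros [C HC] [D HD]; exists (C + D).
  generalize (filter_and _ _ HC HD); apply filter_imp; intros n [Hu Hv].
  eapply Rle_trans; [apply Rabs_triang|lra].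
Qed.

Lemma bigO_scal (E k : R) (u : nat -> R) : bigO E u -> bigO E (fun n => k * u n).
Proof.
  intros [C HC]; exists (Rabs k * C).
  generalize HC; apply filter_imp; intros n Hu.
  rewrite Rabs_mult, Rmult_assoc; apply Rmult_le_compat_l; [apply Rabs_pos|exact Hu].
Qed.

Lemma bigO_opp (E : R) (u : nat -> R) : bigO E u -> bigO E (fun n => - u n).
Proof.
  intros Hu; apply bigO_ext with (fun n => -1 * u n); [apply bigO_scal, Hu|].
  apply filter_forall; intros; ring.
Qed.

Lemma bigO_sub (E : R) (u v : nat -> R) :
  bigO E u -> bigO E v -> bigO E (fun n => u n - v n).
Proof. intros; apply bigO_add; [|apply bigO_opp]; assumption. Qed.

Lemma bigO_mul (E F : R) (u v : nat -> R) :
  bigO E u -> bigO F v -> bigO (E + F) (fun n => u n * v n).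
Proof.
  intros Hu Hv.
  destruct (bigO_normalize _ _ Hu) as [C [HC HCu]].
  destruct (bigO_normalize _ _ Hv) as [D [HD HDv]].
  exists (C * D); generalize (filter_and _ _ HCu HDv); apply filter_imp.
  intros n [[_ Hun] [_ Hvn]].
  rewrite Rabs_mult, <- npow_mul.
  replace (C * D * (npow E n * npow F n)) with ((C * npow E n) * (D * npow F n)) by ring.
  apply Rmult_le_compat; auto using Rabs_pos.
Qed.

Lemma bigO_shift (E : R) (u : nat -> R) :
  0 <= E -> bigO E u -> bigO E (fun n => u (S n)).
Proof.
  intros HE Hu; destruct (bigO_normalize _ _ Hu) as [C [HC HCu]]; exists C.
  generalize (filter_and _ _ (eventually_ge 1) (eventually_shift _ HCu)).
  apply filter_imp; intros n [Hn [_ Hun]].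
  eapply Rle_trans; [exact Hun|].
  apply Rmult_le_compat_l; [exact HC|apply npow_succ_le; assumption].
Qed.

Lemma bigO_vanish (E : R) (u : nat -> R) : 0 < E -> bigO E u ->
  forall eps, 0 < eps -> eventually (fun n => Rabs (u n) <= eps).
Proof.
  intros HE Hu eps Heps; destruct (bigO_normalize _ _ Hu) as [C [HC HCu]].
  assert (Hq : 0 < eps / (C + 1)) by (apply Rdiv_lt_0_compat; lra).
  generalize (filter_and _ _ HCu (npow_vanish _ _ HE Hq)); apply filter_imp.
  intros n [[_ Hun] Hsmall].
  apply (Rle_trans _ _ _ Hun), (Rle_trans _ (C * (eps / (C + 1)))).
  - apply Rmult_le_compat_l; assumption.
  - apply (Rmult_le_reg_r (C + 1)); [lra|].
    replace (C * (eps / (C + 1)) * (C + 1)) with (C * eps) by (field; lra); nra.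
Qed.

Fixpoint gpoly (l : list (R * R)) (n : nat) : R :=
  match l with
  | nil => 0
  | p :: l' => fst p * npow (snd p) n + gpoly l' n
  end.

Definition exps_ge (s : R) (l : list (R * R)) : Prop := List.Forall (fun p => s <= snd p) l.

Definition gmul (l l' : list (R * R)) : list (R * R) :=
  flat_map (fun p => map (fun q => (fst p * fst q, snd p + snd q)) l') l.

Lemma gpoly_app (l l' : list (R * R)) (n : nat) :
  gpoly (l ++ l') n = gpoly l n + gpoly l' n.
Proof. induction l as [|p l IH]; simpl; [ring|rewrite IH; ring]. Qed.

Lemma gpoly_scal (k : R) (l : list (R * R)) (n : nat) :
  gpoly (map (fun p => (k * fst p, snd p)) l) n = k * gpoly l n.
Proof. induction l as [|p l IH]; simpl; [ring|rewrite IH; ring]. Qed.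

Lemma gpoly_mul (l l' : list (R * R)) (n : nat) :
  gpoly (gmul l l') n = gpoly l n * gpoly l' n.
Proof.
  assert (Hmap : forall p, gpoly (map (fun q => (fst p * fst q, snd p + snd q)) l') n
                           = fst p * npow (snd p) n * gpoly l' n).
  { intros p; induction l' as [|q l' IH]; simpl; [ring|rewrite IH, <- npow_mul; ring]. }
  induction l as [|p l IH]; [simpl; ring|].
  unfold gmul; cbn [flat_map]; rewrite gpoly_app, Hmap; fold (gmul l l').
  rewrite IH; simpl; ring.
Qed.

Lemma exps_ge_mono (s t : R) (l : list (R * R)) : exps_ge s l -> t <= s -> exps_ge t l.
Proof. intros Hl Hts; eapply Forall_impl; [|exact Hl]; simpl; intros; lra. Qed.

Lemma exps_ge_scal (s k : R) (l : list (R * R)) :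
  exps_ge s l -> exps_ge s (map (fun p => (k * fst p, snd p)) l).
Proof. intros Hl; apply Forall_map; eapply Forall_impl; [|exact Hl]; auto. Qed.

Lemma exps_ge_mul (s t : R) (l l' : list (R * R)) :
  exps_ge s l -> exps_ge t l' -> exps_ge (s + t) (gmul l l').
Proof.
  intros Hl Hl'; apply Forall_flat_map; eapply Forall_impl; [|exact Hl].
  intros p Hp; apply Forall_map; eapply Forall_impl; [|exact Hl']; simpl; intros; lra.
Qed.

Lemma bigO_gpoly (s : R) (l : list (R * R)) : exps_ge s l -> bigO s (gpoly l).
Proof.
  induction 1 as [|p l Hp _ IH]; simpl.
  - exists 0; apply filter_forall; intros; rewrite Rabs_R0; lra.
  - apply bigO_add; [apply bigO_scal|exact IH].
    exists 1; exists 1%nat; intros n Hn.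
    rewrite Rabs_pos_eq, Rmult_1_l by (left; apply npow_gt0); apply npow_antimono; auto.
Qed.

Definition has_expansion (s : R) (u : nat -> R) : Prop :=
  forall E, exists l, exps_ge s l /\ bigO E (fun n => u n - gpoly l n).

Lemma has_expansion_intro (s : R) (u : nat -> R) :
  (forall E, 0 <= E -> exists l, exps_ge s l /\ bigO E (fun n => u n - gpoly l n)) ->
  has_expansion s u.
Proof.
  intros H E; destruct (H (Rmax E 0) (Rmax_r _ _)) as [l [Hl HO]].
  exists l; split; [exact Hl|]; eapply bigO_mono; [exact HO|apply Rmax_l].
Qed.

Lemma has_expansion_ext (s : R) (u v : nat -> R) :
  has_expansion s u -> eventually (fun n => u n = v n) -> has_expansion s v.
Proof.
  intros Hu Huv E; destruct (Hu E) as [l [Hl HO]]; exists l; split; [exact Hl|].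
  eapply bigO_ext; [exact HO|].
  generalize Huv; apply filter_imp; intros n ->; reflexivity.
Qed.

Lemma has_expansion_bigO (s : R) (u : nat -> R) : has_expansion s u -> bigO s u.
Proof.
  intros Hu; destruct (Hu s) as [l [Hl HO]].
  apply bigO_ext with (fun n => (u n - gpoly l n) + gpoly l n).
  - apply bigO_add; [exact HO|apply bigO_gpoly, Hl].
  - apply filter_forall; intros; ring.
Qed.

Lemma has_expansion_mono (s t : R) (u : nat -> R) :
  has_expansion s u -> t <= s -> has_expansion t u.
Proof.
  intros Hu Hts E; destruct (Hu E) as [l [Hl HO]].
  exists l; split; [eapply exps_ge_mono; eassumption|exact HO].
Qed.

Lemma has_expansion_gpoly (s : R) (l : list (R * R)) :
  exps_ge s l -> has_expansion s (gpoly l).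
Proof.
  intros Hl E; exists l; split; [exact Hl|].
  exists 0; apply filter_forall; intros; rewrite Rminus_diag, Rabs_R0; lra.
Qed.

Lemma has_expansion_npow (e : R) : has_expansion e (npow e).
Proof.
  apply has_expansion_ext with (gpoly ((1, e) :: nil)).
  - apply has_expansion_gpoly; repeat constructor; simpl; lra.
  - apply filter_forall; intros; simpl; ring.
Qed.

Lemma has_expansion_0 (s : R) : has_expansion s (fun _ => 0).
Proof.
  apply has_expansion_ext with (gpoly nil);
    [apply has_expansion_gpoly; constructor|apply filter_forall; reflexivity].
Qed.

Lemma has_expansion_add (s : R) (u v : nat -> R) :
  has_expansion s u -> has_expansion s v -> has_expansion s (fun n => u n + v n).
Proof.
  intros Hu Hv E; destruct (Hu E) as [l [Hl HOl]]; destruct (Hv E) as [l' [Hl' HOl']].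
  exists (l ++ l'); split; [apply Forall_app; split; assumption|].
  eapply bigO_ext; [apply (bigO_add _ _ _ HOl HOl')|].
  apply filter_forall; intros; rewrite gpoly_app; ring.
Qed.

Lemma has_expansion_scal (s k : R) (u : nat -> R) :
  has_expansion s u -> has_expansion s (fun n => k * u n).
Proof.
  intros Hu E; destruct (Hu E) as [l [Hl HO]].
  exists (map (fun p => (k * fst p, snd p)) l); split; [apply exps_ge_scal, Hl|].
  eapply bigO_ext; [apply (bigO_scal _ k _ HO)|].
  apply filter_forall; intros; rewrite gpoly_scal; ring.
Qed.

Lemma has_expansion_opp (s : R) (u : nat -> R) :
  has_expansion s u -> has_expansion s (fun n => - u n).
Proof.
  intros Hu; eapply has_expansion_ext; [apply (has_expansion_scal _ (-1)), Hu|].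
  apply filter_forall; intros; ring.
Qed.

Lemma has_expansion_sub (s : R) (u v : nat -> R) :
  has_expansion s u -> has_expansion s v -> has_expansion s (fun n => u n - v n).
Proof. intros; apply has_expansion_add; [|apply has_expansion_opp]; assumption. Qed.

Lemma has_expansion_mul (s t : R) (u v : nat -> R) :
  has_expansion s u -> has_expansion t v -> has_expansion (s + t) (fun n => u n * v n).
Proof.
  intros Hu Hv E.
  destruct (Hu (E - t)) as [l [Hl HOl]]; destruct (Hv (E - s)) as [l' [Hl' HOl']].
  exists (gmul l l'); split; [apply exps_ge_mul; assumption|].
  apply bigO_ext with
    (fun n => (u n - gpoly l n) * v n + gpoly l n * (v n - gpoly l' n)).
  - apply bigO_add.
    + replace E with (E - t + t) by ring.
      apply bigO_mul; [exact HOl|apply has_expansion_bigO, Hv].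
    + replace E with (s + (E - s)) by ring.
      apply bigO_mul; [apply bigO_gpoly, Hl|exact HOl'].
  - apply filter_forall; intros; rewrite gpoly_mul; ring.
Qed.

Lemma has_expansion_sum (s : R) (F : nat -> nat -> R) (j m : nat) :
  (forall i, (j <= i <= m)%nat -> has_expansion s (F i)) ->
  has_expansion s (fun n => sum_n_m (fun i => F i n) j m).
Proof.
  intros HF; induction m as [|m IH].
  - destruct j as [|j].
    + eapply has_expansion_ext; [apply (HF 0%nat); lia|].
      apply filter_forall; intros; rewrite sum_n_n; reflexivity.
    + eapply has_expansion_ext; [apply has_expansion_0|].
      apply filter_forall; intros; rewrite sum_n_m_zero by lia; reflexivity.
  - destruct (le_lt_dec j (S m)) as [Hj|Hj].
    + destruct (Nat.eq_dec j (S m)) as [->|Hne].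
      * eapply has_expansion_ext; [apply (HF (S m)); lia|].
        apply filter_forall; intros; rewrite sum_n_n; reflexivity.
      * eapply has_expansion_ext;
          [apply has_expansion_add; [apply IH; intros; apply HF; lia|apply (HF (S m)); lia]|].
        apply filter_forall; intros; rewrite sum_n_Sm by lia; reflexivity.
    + eapply has_expansion_ext; [apply has_expansion_0|].
      apply filter_forall; intros; rewrite sum_n_m_zero by lia; reflexivity.
Qed.

(** * Differences *)

Fixpoint poly (b : nat -> R) (K : nat) (t : R) : R :=
  match K with
  | O => 0
  | S K' => poly b K' t + b K' * t ^ K'
  end.

Lemma poly_0 (b : nat -> R) (K : nat) : poly b (S K) 0 = b O.
Proof. induction K as [|K IH]; simpl in *; [ring|rewrite IH; ring]. Qed.

Lemma derivable_pt_lim_poly (b b' : nat -> R) (s : R) :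
  (forall i, b (S i) = s * b' i / INR (S i)) ->
  forall K t, derivable_pt_lim (poly b (S K)) t (s * poly b' K t).
Proof.
  intros Hb; induction K as [|K IH]; intros t.
  - apply derivable_pt_lim_ext with (fct_cte (b O)); [intros; unfold fct_cte; simpl; ring|].
    rewrite Rmult_0_r; apply derivable_pt_lim_const.
  - apply derivable_pt_lim_ext with
      (plus_fct (poly b (S K)) (mult_real_fct (b (S K)) (fun y => y ^ S K)));
      [intros; reflexivity|].
    replace (s * poly b' (S K) t)
      with (s * poly b' K t + b (S K) * (INR (S K) * t ^ Init.Nat.pred (S K))).
    + apply derivable_pt_lim_plus; [apply IH|].
      apply derivable_pt_lim_scal, derivable_pt_lim_pow.
    + rewrite Hb; cbn [poly Init.Nat.pred]; field; apply not_0_INR; lia.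
Qed.

Lemma Rpower_base_1 (s : R) : Rpower 1 s = 1.
Proof. unfold Rpower; rewrite ln_1, Rmult_0_r; apply exp_0. Qed.

Lemma derivable_pt_lim_Rpower_1p (s t : R) : 0 <= t ->
  derivable_pt_lim (fun t => Rpower (1 + t) s) t (s * Rpower (1 + t) (s - 1)).
Proof.
  intros Ht.
  apply derivable_pt_lim_ext with (comp (fun x => Rpower x s) (plus_fct (fct_cte 1) id));
    [intros; reflexivity|].
  replace (s * Rpower (1 + t) (s - 1))
    with (s * Rpower (plus_fct (fct_cte 1) id t) (s - 1) * (0 + 1))
    by (unfold plus_fct, fct_cte, id; ring).
  apply derivable_pt_lim_comp.
  - apply derivable_pt_lim_plus; [apply derivable_pt_lim_const|apply derivable_pt_lim_id].
  - apply derivable_pt_lim_power; unfold plus_fct, fct_cte, id; lra.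
Qed.

Lemma bound_from_derivative (f f' : R -> R) (M : R) (K : nat) :
  f 0 = 0 ->
  (forall c, 0 <= c <= 1 -> derivable_pt_lim f c (f' c)) ->
  (forall c, 0 <= c <= 1 -> Rabs (f' c) <= M * c ^ K) ->
  forall t, 0 <= t <= 1 -> Rabs (f t) <= M * t ^ S K.
Proof.
  intros Hf0 Hf' Hbound t Ht.
  destruct (Req_dec t 0) as [->|Ht0].
  - rewrite Hf0, Rabs_R0; simpl; lra.
  - destruct (MVT_cor2 f f' 0 t) as [c [Hmvt Hc]]; [lra|intros; apply Hf'; lra|].
    rewrite Hf0, !Rminus_0_r in Hmvt; rewrite Hmvt, Rabs_mult, (Rabs_pos_eq t) by lra.
    specialize (Hbound c ltac:(lra)).
    assert (HcK : 0 < c ^ K) by (apply pow_lt; lra).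
    assert (HM : 0 <= M) by (pose proof (Rabs_pos (f' c)); nra).
    assert (0 <= M * (t ^ K - c ^ K))
      by (apply Rmult_le_pos; [|assert (c ^ K <= t ^ K) by (apply pow_incr; lra)]; lra).
    simpl; apply Rle_trans with (M * c ^ K * t); [apply Rmult_le_compat_r; lra|nra].
Qed.

Lemma Rpower_1p_taylor (K : nat) : forall s, exists b : nat -> R,
  b O = 1 /\ b 1%nat = s /\
  exists C, forall t, 0 <= t <= 1 -> Rabs (Rpower (1 + t) s - poly b K t) <= C * t ^ K.
Proof.
  induction K as [|K IH]; intros s.
  - exists (fun i => match i with O => 1 | _ => s end); split; [|split]; try reflexivity.
    exists (exp (Rabs s * ln 2)); intros t Ht; simpl.
    rewrite Rminus_0_r, Rmult_1_r, Rabs_pos_eq by (left; apply exp_pos).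
    assert (0 <= ln (1 + t) <= ln 2) by (split; [rewrite <- ln_1|]; apply ln_le; lra).
    unfold Rpower; destruct (Req_dec (s * ln (1 + t)) (Rabs s * ln 2)) as [->|Hne];
      [lra|left; apply exp_increasing].
    assert (s * ln (1 + t) <= Rabs s * ln (1 + t))
      by (apply Rmult_le_compat_r; [lra|apply Rle_abs]).
    pose proof (Rabs_pos s); nra.
  - destruct (IH (s - 1)) as [b' [Hb'0 [_ [C' HC']]]].
    exists (fun i => match i with O => 1 | S j => s * b' j / INR (S j) end).
    split; [reflexivity|split; [rewrite Hb'0; simpl; field|]].
    exists (Rabs s * C').
    apply (bound_from_derivative (fun t => Rpower (1 + t) s - poly _ (S K) t)
             (fun t => s * (Rpower (1 + t) (s - 1) - poly b' K t))).
    + rewrite poly_0, Rplus_0_r, Rpower_base_1; simpl; ring.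
    + intros c Hc; rewrite Rmult_minus_distr_l.
      apply derivable_pt_lim_minus;
        [apply derivable_pt_lim_Rpower_1p; lra|apply derivable_pt_lim_poly; reflexivity].
    + intros c Hc; rewrite Rabs_mult, Rmult_assoc.
      apply Rmult_le_compat_l; [apply Rabs_pos|apply HC', Hc].
Qed.

Fixpoint taylor_tail (b : nat -> R) (e : R) (K : nat) : list (R * R) :=
  match K with
  | O => nil
  | S K' => (b (S (S K')), e + INR (S (S K'))) :: taylor_tail b e K'
  end.

Lemma gpoly_taylor_tail (b : nat -> R) (e : R) (K n : nat) : (1 <= n)%nat ->
  gpoly (taylor_tail b e K) n
  = npow e n * (poly b (S (S K)) (/ INR n) - b O - b 1%nat * / INR n).
Proof.
  intros Hn; induction K as [|K IH]; cbn [taylor_tail gpoly fst snd].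
  - simpl; ring.
  - rewrite IH, npow_add_nat by exact Hn.
    change (poly b (S (S (S K))) (/ INR n))
      with (poly b (S (S K)) (/ INR n) + b (S (S K)) * (/ INR n) ^ S (S K)); ring.
Qed.

Lemma exps_ge_taylor_tail (b : nat -> R) (e : R) (K : nat) :
  exps_ge (e + 2) (taylor_tail b e K).
Proof.
  induction K as [|K IH]; constructor; [|exact IH]; cbn [snd].
  assert (2 <= INR (S (S K))) by (apply (le_INR 2); lia); lra.
Qed.

(* (n+1)^(-e) = n^(-e) (1 + 1/n)^(-e), the last factor expanded by Taylor's formula in 1/n. *)
Lemma has_expansion_npow_succ (e : R) :
  has_expansion (e + 2) (fun n => npow e (S n) - npow e n + e * npow (e + 1) n).
Proof.
  apply has_expansion_intro; intros E HE.
  destruct (INR_archimed 1 (E - e)) as [K HK]; [lra|]; rewrite Rmult_1_r in HK.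
  destruct (Rpower_1p_taylor (S (S K)) (- e)) as [b [Hb0 [Hb1 [C HC]]]].
  exists (taylor_tail b e K); split; [apply exps_ge_taylor_tail|].
  exists C, 1%nat; intros n Hn.
  assert (Hn0 : 0 < INR n) by (apply (lt_INR 0); lia).
  assert (Ht : 0 <= / INR n <= 1).
  { split; [left; apply Rinv_0_lt_compat, Hn0|].
    rewrite <- Rinv_1; apply Rinv_le_contravar; [lra|apply (le_INR 1), Hn]. }
  specialize (HC _ Ht).
  assert (HC0 : 0 <= C).
  { assert (0 < (/ INR n) ^ S (S K)) by (apply pow_lt, Rinv_0_lt_compat, Hn0).
    pose proof (Rabs_pos (Rpower (1 + / INR n) (- e) - poly b (S (S K)) (/ INR n))); nra. }
  rewrite gpoly_taylor_tail, npow_succ, Hb0, Hb1 by exact Hn.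
  replace (npow (e + 1) n) with (npow e n * (/ INR n) ^ 1)
    by (rewrite <- npow_add_nat by exact Hn; f_equal).
  replace (npow e n * Rpower (1 + / INR n) (- e) - npow e n
           + e * (npow e n * (/ INR n) ^ 1)
           - npow e n * (poly b (S (S K)) (/ INR n) - 1 - - e * / INR n))
    with (npow e n * (Rpower (1 + / INR n) (- e) - poly b (S (S K)) (/ INR n))) by ring.
  rewrite Rabs_mult, Rabs_pos_eq by (left; apply npow_gt0).
  apply Rle_trans with (npow e n * (C * (/ INR n) ^ S (S K)));
    [apply Rmult_le_compat_l; [left; apply npow_gt0|exact HC]|].
  replace (npow e n * (C * (/ INR n) ^ S (S K))) with (C * npow (e + INR (S (S K))) n)
    by (rewrite npow_add_nat by exact Hn; ring).
  apply Rmult_le_compat_l; [exact HC0|apply npow_antimono; [exact Hn|]].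
  rewrite !S_INR; lra.
Qed.

Lemma has_expansion_diff_npow (e : R) :
  has_expansion (e + 1) (fun n => npow e (S n) - npow e n).
Proof.
  eapply has_expansion_ext.
  - apply has_expansion_sub;
      [apply (has_expansion_mono (e + 2)); [apply has_expansion_npow_succ|lra]|].
    apply has_expansion_scal with (k := e), has_expansion_npow.
  - apply filter_forall; intros; ring.
Qed.

Lemma has_expansion_diff_gpoly (s : R) (l : list (R * R)) :
  exps_ge s l -> has_expansion (s + 1) (fun n => gpoly l (S n) - gpoly l n).
Proof.
  induction 1 as [|p l Hp _ IH]; simpl.
  - eapply has_expansion_ext; [apply has_expansion_0|apply filter_forall; intros; ring].
  - eapply has_expansion_ext.
    + apply has_expansion_add; [|exact IH].
      apply has_expansion_scal with (k := fst p) (u := fun n => npow (snd p) (S n) - npow (snd p) n).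
      eapply has_expansion_mono; [apply has_expansion_diff_npow|lra].
    + apply filter_forall; intros; ring.
Qed.

Lemma has_expansion_diff (s : R) (u : nat -> R) :
  has_expansion s u -> has_expansion (s + 1) (fun n => u (S n) - u n).
Proof.
  intros Hu; apply has_expansion_intro; intros E HE.
  destruct (Hu E) as [l [Hl HO]].
  destruct (has_expansion_diff_gpoly s l Hl E) as [l' [Hl' HO']].
  exists l'; split; [exact Hl'|].
  eapply bigO_ext; [apply (bigO_add _ _ _ HO' (bigO_sub _ _ _ (bigO_shift _ _ HE HO) HO))|].
  apply filter_forall; intros; ring.
Qed.

(** * Leading terms *)

Definition has_lead (c s : R) (u : nat -> R) : Prop :=
  exists g, 0 < g /\ has_expansion (s + g) (fun n => u n - c * npow s n).

Lemma has_lead_ext (c s : R) (u v : nat -> R) :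
  has_lead c s u -> eventually (fun n => u n = v n) -> has_lead c s v.
Proof.
  intros [g [Hg Hu]] Huv; exists g; split; [exact Hg|].
  eapply has_expansion_ext; [exact Hu|].
  generalize Huv; apply filter_imp; intros n ->; reflexivity.
Qed.

Lemma has_lead_expansion (c s : R) (u : nat -> R) : has_lead c s u -> has_expansion s u.
Proof.
  intros [g [Hg Hu]].
  apply has_expansion_ext with (fun n => (u n - c * npow s n) + c * npow s n).
  - apply has_expansion_add; [eapply has_expansion_mono; [exact Hu|lra]|].
    apply has_expansion_scal, has_expansion_npow.
  - apply filter_forall; intros; ring.
Qed.

Lemma has_lead_normalized (c s : R) (u : nat -> R) : has_lead c s u ->
  exists g, 0 < g /\ has_expansion g (fun n => npow (- s) n * (u n - c * npow s n)).
Proof.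
  intros [g [Hg Hu]]; exists g; split; [exact Hg|].
  replace g with (- s + (s + g)) at 1 by ring.
  apply has_expansion_mul; [apply has_expansion_npow|exact Hu].
Qed.

Lemma has_lead_scal (c s k : R) (u : nat -> R) :
  has_lead c s u -> has_lead (k * c) s (fun n => k * u n).
Proof.
  intros [g [Hg Hu]]; exists g; split; [exact Hg|].
  eapply has_expansion_ext; [apply (has_expansion_scal _ k), Hu|].
  apply filter_forall; intros; ring.
Qed.

Lemma has_lead_add (c d s : R) (u v : nat -> R) :
  has_lead c s u -> has_lead d s v -> has_lead (c + d) s (fun n => u n + v n).
Proof.
  intros [g [Hg Hu]] [g' [Hg' Hv]]; exists (Rmin g g'); split;
    [apply Rmin_glb_lt; assumption|].
  eapply has_expansion_ext.
  - apply has_expansion_add;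
      [apply (has_expansion_mono _ _ _ Hu)|apply (has_expansion_mono _ _ _ Hv)];
      apply Rplus_le_compat_l; [apply Rmin_l|apply Rmin_r].
  - apply filter_forall; intros; ring.
Qed.

Lemma has_lead_add_higher (c s t : R) (u v : nat -> R) :
  has_lead c s u -> has_expansion t v -> s < t -> has_lead c s (fun n => u n + v n).
Proof.
  intros [g [Hg Hu]] Hv Hst; exists (Rmin g (t - s)); split;
    [apply Rmin_glb_lt; lra|].
  eapply has_expansion_ext.
  - apply has_expansion_add;
      [apply (has_expansion_mono _ _ _ Hu)|apply (has_expansion_mono _ _ _ Hv)].
    + apply Rplus_le_compat_l, Rmin_l.
    + pose proof (Rmin_r g (t - s)); lra.
  - apply filter_forall; intros; ring.
Qed.

Lemma has_lead_add_min (c d a b : R) (u v : nat -> R) :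
  has_lead c a u -> has_lead d b v -> 0 < c -> 0 < d ->
  exists e, 0 < e /\ has_lead e (Rmin a b) (fun n => u n + v n).
Proof.
  intros Hu Hv Hc Hd; destruct (Rtotal_order a b) as [Hab|[<-|Hab]].
  - exists c; split; [exact Hc|]; rewrite Rmin_left by lra.
    apply (has_lead_add_higher _ _ b); [exact Hu|apply (has_lead_expansion _ _ _ Hv)|exact Hab].
  - exists (c + d); split; [lra|]; rewrite Rmin_left by lra.
    apply has_lead_add; assumption.
  - exists d; split; [exact Hd|]; rewrite Rmin_right by lra.
    apply has_lead_ext with (fun n => v n + u n);
      [|apply filter_forall; intros; ring].
    apply (has_lead_add_higher _ _ a); [exact Hv|apply (has_lead_expansion _ _ _ Hu)|exact Hab].
Qed.

Lemma has_lead_mul (c d s t : R) (u v : nat -> R) :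
  has_lead c s u -> has_lead d t v -> has_lead (c * d) (s + t) (fun n => u n * v n).
Proof.
  intros Hu Hv; pose proof (has_lead_expansion _ _ _ Hv) as Ev.
  destruct Hu as [g [Hg Hu]]; destruct Hv as [g' [Hg' Hv]].
  exists (Rmin g g'); split; [apply Rmin_glb_lt; assumption|].
  eapply has_expansion_ext.
  - apply has_expansion_add.
    + eapply has_expansion_mono; [apply (has_expansion_mul _ _ _ _ Hu Ev)|].
      pose proof (Rmin_l g g'); lra.
    + eapply has_expansion_mono;
        [apply (has_expansion_scal _ c), (has_expansion_mul _ _ _ _ (has_expansion_npow s) Hv)|].
      pose proof (Rmin_r g g'); lra.
  - apply filter_forall; intros n; cbv beta; rewrite <- npow_mul; ring.
Qed.

Lemma has_lead_diff (c s : R) (u : nat -> R) :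
  has_lead c s u -> has_lead (- (c * s)) (s + 1) (fun n => u (S n) - u n).
Proof.
  intros [g [Hg Hu]]; exists (Rmin g 1); split; [apply Rmin_glb_lt; lra|].
  eapply has_expansion_ext.
  - apply has_expansion_add.
    + eapply has_expansion_mono; [apply (has_expansion_diff _ _ Hu)|].
      pose proof (Rmin_l g 1); lra.
    + eapply has_expansion_mono; [apply (has_expansion_scal _ c), (has_expansion_npow_succ s)|].
      pose proof (Rmin_r g 1); lra.
  - apply filter_forall; intros; ring.
Qed.

Lemma has_lead_shift (c s : R) (u : nat -> R) :
  has_lead c s u -> has_lead c s (fun n => u (S n)).
Proof.
  intros Hu; apply has_lead_ext with (fun n => u n + (u (S n) - u n));
    [|apply filter_forall; intros; ring].
  apply (has_lead_add_higher _ _ (s + 1)); [exact Hu| |lra].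
  apply has_expansion_diff, (has_lead_expansion _ _ _ Hu).
Qed.

Lemma has_lead_vanish (c s : R) (u : nat -> R) : has_lead c s u -> 0 < s ->
  forall eps, 0 < eps -> eventually (fun n => Rabs (u n) <= eps).
Proof.
  intros Hu Hs; apply (bigO_vanish s u Hs), has_expansion_bigO, (has_lead_expansion _ _ _ Hu).
Qed.

Lemma has_lead_eventually_ge (c s : R) (u : nat -> R) : has_lead c s u -> 0 < c ->
  eventually (fun n => c / 2 * npow s n <= u n).
Proof.
  intros Hu Hc; destruct (has_lead_normalized _ _ _ Hu) as [g [Hg Hw]].
  generalize (bigO_vanish _ _ Hg (has_expansion_bigO _ _ Hw) (c / 2) ltac:(lra)).
  apply filter_imp; intros n Hn; apply Rabs_le_between in Hn as [Hn _].
  rewrite npow_opp in Hn; pose proof (npow_gt0 s n).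
  apply (Rmult_le_compat_l (npow s n)) in Hn; [|lra].
  rewrite <- Rmult_assoc, Rinv_r in Hn by lra; lra.
Qed.

Lemma has_lead_monomial (k s : R) : has_lead k s (fun n => k * npow s n).
Proof.
  exists 1; split; [lra|].
  eapply has_expansion_ext; [apply has_expansion_0|apply filter_forall; intros; ring].
Qed.

Lemma inv_1p_expansion_order (g : R) (r : nat -> R) : 0 < g -> has_expansion g r ->
  forall K, exists l, exps_ge g l /\
    bigO (INR (S K) * g) (fun n => / (1 + r n) - 1 - gpoly l n).
Proof.
  intros Hg Hr.
  assert (Hsmall : eventually (fun n => Rabs (r n) <= 1 / 2))
    by (apply (bigO_vanish g); [exact Hg|apply has_expansion_bigO, Hr|lra]).
  induction K as [|K [l [Hl HO]]].
  - exists nil; split; [constructor|]; rewrite Rmult_1_l.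
    apply bigO_ext with (fun n => - r n * / (1 + r n)).
    + replace g with (g + 0) by ring.
      apply bigO_mul; [apply bigO_opp, has_expansion_bigO, Hr|].
      exists 2; generalize Hsmall; apply filter_imp; intros n Hn.
      apply Rabs_le_between in Hn; rewrite npow_0, Rmult_1_r, Rabs_pos_eq.
      * rewrite <- (Rinv_inv 2); apply Rinv_le_contravar; lra.
      * left; apply Rinv_0_lt_compat; lra.
    + generalize Hsmall; apply filter_imp; intros n Hn; apply Rabs_le_between in Hn.
      simpl; field; lra.
  - (* [h = / (1 + r) - 1] solves [h = - r - r h]: an approximation of [h] to order
       [(K+1) g] yields one to order [(K+2) g]. *)
    assert (Hnext : has_expansion g (fun n => - r n - r n * gpoly l n)).
    { apply has_expansion_sub; [apply has_expansion_opp, Hr|].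
      apply (has_expansion_mono (g + g)); [|lra].
      apply has_expansion_mul; [exact Hr|apply has_expansion_gpoly, Hl]. }
    destruct (Hnext (INR (S (S K)) * g)) as [l' [Hl' HO']].
    exists l'; split; [exact Hl'|].
    apply bigO_ext with (fun n => (- r n - r n * gpoly l n - gpoly l' n)
                                  + - r n * (/ (1 + r n) - 1 - gpoly l n)).
    + apply bigO_add; [exact HO'|].
      replace (INR (S (S K)) * g) with (g + INR (S K) * g) by (rewrite (S_INR (S K)); ring).
      apply bigO_mul; [apply bigO_opp, has_expansion_bigO, Hr|exact HO].
    + generalize Hsmall; apply filter_imp; intros n Hn; apply Rabs_le_between in Hn.
      field; lra.
Qed.

Lemma has_expansion_inv_1p (g : R) (r : nat -> R) : 0 < g -> has_expansion g r ->
  has_expansion g (fun n => / (1 + r n) - 1).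
Proof.
  intros Hg Hr; apply has_expansion_intro; intros E HE.
  destruct (INR_archimed g E Hg) as [K HK].
  destruct (inv_1p_expansion_order g r Hg Hr K) as [l [Hl HO]].
  exists l; split; [exact Hl|]; eapply bigO_mono; [exact HO|rewrite S_INR; lra].
Qed.

Lemma has_lead_inv (c s : R) (u : nat -> R) : has_lead c s u -> c <> 0 ->
  has_lead (/ c) (- s) (fun n => / u n).
Proof.
  intros Hu Hc; destruct (has_lead_normalized _ _ _ Hu) as [g [Hg Hw]].
  set (r := fun n => / c * (npow (- s) n * (u n - c * npow s n))).
  assert (Hr : has_expansion g r) by apply has_expansion_scal, Hw.
  exists g; split; [exact Hg|].
  apply has_expansion_ext with (fun n => / c * (npow (- s) n * (/ (1 + r n) - 1))).
  - apply has_expansion_scal, has_expansion_mul;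
      [apply has_expansion_npow|apply has_expansion_inv_1p; assumption].
  - generalize (bigO_vanish _ _ Hg (has_expansion_bigO _ _ Hr) (1 / 2) ltac:(lra)).
    apply filter_imp; intros n Hn; apply Rabs_le_between in Hn.
    pose proof (npow_gt0 s n).
    assert (Hun : u n = c * npow s n * (1 + r n))
      by (unfold r; rewrite npow_opp; field; lra).
    rewrite Hun, npow_opp; field; repeat split; lra.
Qed.

(** * Relative approximation *)

Definition littleo (E : R) (u : nat -> R) : Prop :=
  forall eps, 0 < eps -> eventually (fun n => Rabs (u n) <= eps * npow E n).

Definition bounded (u : nat -> R) : Prop := exists M, eventually (fun n => Rabs (u n) <= M).

Lemma littleo_ext (E : R) (u v : nat -> R) :
  littleo E u -> eventually (fun n => u n = v n) -> littleo E v.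
Proof.
  intros Hu Huv eps Heps.
  generalize (filter_and _ _ (Hu eps Heps) Huv); apply filter_imp; intros n [Hn <-]; exact Hn.
Qed.

Lemma littleo_mono (E F : R) (u : nat -> R) : littleo E u -> F <= E -> littleo F u.
Proof.
  intros Hu HFE eps Heps.
  generalize (filter_and _ _ (eventually_ge 1) (Hu eps Heps)); apply filter_imp.
  intros n [Hn Hun]; eapply Rle_trans; [exact Hun|].
  apply Rmult_le_compat_l; [lra|apply npow_antimono; assumption].
Qed.

Lemma littleo_shift (E : R) (u : nat -> R) :
  0 <= E -> littleo E u -> littleo E (fun n => u (S n)).
Proof.
  intros HE Hu eps Heps.
  generalize (filter_and _ _ (eventually_ge 1) (eventually_shift _ (Hu eps Heps))).
  apply filter_imp; intros n [Hn Hun]; eapply Rle_trans; [exact Hun|].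
  apply Rmult_le_compat_l; [lra|apply npow_succ_le; assumption].
Qed.

Lemma littleo_vanish (E : R) (u : nat -> R) : 0 <= E -> littleo E u ->
  forall eps, 0 < eps -> eventually (fun n => Rabs (u n) <= eps).
Proof.
  intros HE Hu eps Heps.
  generalize (filter_and _ _ (eventually_ge 1) (Hu eps Heps)); apply filter_imp.
  intros n [Hn Hun]; pose proof (npow_le1 E n Hn HE); nra.
Qed.

Lemma littleo_add (E : R) (u v : nat -> R) :
  littleo E u -> littleo E v -> littleo E (fun n => u n + v n).
Proof.
  intros Hu Hv eps Heps; assert (Heps2 : 0 < eps / 2) by lra.
  generalize (filter_and _ _ (Hu _ Heps2) (Hv _ Heps2)); apply filter_imp; intros n [Hun Hvn]; eapply Rle_trans; [apply Rabs_triang|lra].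
Qed.

Lemma littleo_mul_bounded (E : R) (u v : nat -> R) :
  littleo E u -> bounded v -> littleo E (fun n => u n * v n).
Proof.
  intros Hu [M HM] eps Heps.
  assert (HM1 : 0 < Rabs M + 1) by (pose proof (Rabs_pos M); lra).
  assert (Heps' : 0 < eps / (Rabs M + 1)) by (apply Rdiv_lt_0_compat; lra).
  generalize (filter_and _ _ (Hu _ Heps') HM).
  apply filter_imp; intros n [Hun Hvn]; rewrite Rabs_mult.
  pose proof (npow_gt0 E n); pose proof (Rle_abs M).
  apply Rle_trans with (eps / (Rabs M + 1) * npow E n * (Rabs M + 1)).
  - apply Rmult_le_compat; [apply Rabs_pos|apply Rabs_pos|exact Hun|lra].
  - right; field; lra.
Qed.

Lemma littleo_div (E s k : R) (u v : nat -> R) : littleo E u -> 0 < k ->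
  eventually (fun n => k * npow s n <= Rabs (v n)) -> littleo (E - s) (fun n => u n / v n).
Proof.
  intros Hu Hk Hv eps Heps; assert (Hek : 0 < eps * k) by nra.
  generalize (filter_and _ _ (Hu _ Hek) Hv); apply filter_imp.
  intros n [Hun Hvn]; pose proof (npow_gt0 s n); pose proof (npow_gt0 E n).
  assert (Hv0 : 0 < Rabs (v n)) by nra.
  unfold Rdiv; rewrite Rabs_mult, Rabs_inv.
  replace (npow (E - s) n) with (npow E n * / npow s n)
    by (unfold Rminus; rewrite <- npow_mul, npow_opp; reflexivity).
  apply (Rmult_le_reg_r (Rabs (v n))); [exact Hv0|].
  rewrite Rmult_assoc, Rinv_l, Rmult_1_r by lra.
  apply (Rle_trans _ _ _ Hun).
  replace (eps * k * npow E n) with (eps * (npow E n * / npow s n) * (k * npow s n))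
    by (field; lra).
  apply Rmult_le_compat_l; [|exact Hvn].
  apply Rmult_le_pos; [lra|apply Rmult_le_pos; [lra|left; apply Rinv_0_lt_compat; lra]].
Qed.

Lemma littleo_of_lim (E : R) (u : nat -> R) :
  is_lim_seq (fun n => Rpower (INR n) E * u n) 0 -> littleo E u.
Proof.
  intros Hlim eps Heps; apply is_lim_seq_Reals in Hlim.
  destruct (Hlim eps Heps) as [N HN]; exists N; intros n Hn.
  specialize (HN n Hn); unfold R_dist in HN.
  assert (Hp : 0 < Rpower (INR n) E) by apply exp_pos.
  rewrite Rminus_0_r, Rabs_mult, (Rabs_pos_eq (Rpower _ _)) in HN by lra.
  unfold npow; rewrite Rpower_Ropp.
  apply (Rmult_le_reg_l (Rpower (INR n) E)); [exact Hp|].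
  replace (Rpower (INR n) E * (eps * / Rpower (INR n) E)) with eps by (field; lra); lra.
Qed.

Definition rel_approx (E : R) (u v : nat -> R) : Prop :=
  exists w, littleo E w /\ eventually (fun n => u n = v n * (1 + w n)).

Lemma rel_approx_ext (E : R) (u u' v v' : nat -> R) : rel_approx E u v ->
  eventually (fun n => u n = u' n) -> eventually (fun n => v n = v' n) ->
  rel_approx E u' v'.
Proof.
  intros [w [Hw Huv]] Hu Hv; exists w; split; [exact Hw|].
  generalize (filter_and _ _ Huv (filter_and _ _ Hu Hv)); apply filter_imp.
  intros n [Hn [<- <-]]; exact Hn.
Qed.

Lemma rel_approx_shift (E : R) (u v : nat -> R) : 0 <= E -> rel_approx E u v ->
  rel_approx E (fun n => u (S n)) (fun n => v (S n)).
Proof.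
  intros HE [w [Hw Huv]]; exists (fun n => w (S n)); split;
    [apply littleo_shift; assumption|apply (eventually_shift _ Huv)].
Qed.

Lemma rel_approx_mul (E : R) (u v u' v' : nat -> R) : 0 <= E ->
  rel_approx E u v -> rel_approx E u' v' ->
  rel_approx E (fun n => u n * u' n) (fun n => v n * v' n).
Proof.
  intros HE [w [Hw Huv]] [w' [Hw' Huv']].
  exists (fun n => w n + w' n + w n * w' n); split.
  - apply littleo_add; [apply littleo_add; assumption|].
    apply littleo_mul_bounded; [exact Hw|].
    exists 1; apply (littleo_vanish E); [exact HE|exact Hw'|lra].
  - generalize (filter_and _ _ Huv Huv'); apply filter_imp.
    intros n [-> ->]; ring.
Qed.

Lemma rel_approx_inv (E : R) (u v : nat -> R) : 0 <= E -> rel_approx E u v ->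
  rel_approx E (fun n => / u n) (fun n => / v n).
Proof.
  intros HE [w [Hw Huv]].
  assert (Hsmall := littleo_vanish E w HE Hw (1 / 2) ltac:(lra)).
  exists (fun n => - w n / (1 + w n)); split.
  - replace E with (E - 0) by ring; apply littleo_div with (1 / 2); [| lra |].
    + eapply littleo_ext; [apply (littleo_mul_bounded E w (fun _ => -1) Hw)|].
      * exists 1; apply filter_forall; intros; rewrite Rabs_left; lra.
      * apply filter_forall; intros; ring.
    + generalize Hsmall; apply filter_imp; intros n Hn; apply Rabs_le_between in Hn.
      rewrite npow_0, Rabs_pos_eq; lra.
  - generalize (filter_and _ _ Huv Hsmall); apply filter_imp.
    intros n [-> Hn]; apply Rabs_le_between in Hn.
    rewrite Rinv_mult; f_equal; field; lra.
Qed.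

Lemma rel_approx_of_littleo (E s k : R) (u v : nat -> R) :
  littleo E (fun n => u n - v n) -> 0 < k ->
  eventually (fun n => k * npow s n <= Rabs (v n)) -> rel_approx (E - s) u v.
Proof.
  intros Huv Hk Hv; exists (fun n => (u n - v n) / v n); split;
    [apply littleo_div with k; assumption|].
  generalize Hv; apply filter_imp; intros n Hn; pose proof (npow_gt0 s n).
  assert (v n <> 0) by (intro H0; rewrite H0, Rabs_R0 in Hn; nra).
  field; assumption.
Qed.

Lemma littleo_of_rel_approx (E : R) (u v : nat -> R) :
  rel_approx E u v -> bounded v -> littleo E (fun n => u n - v n).
Proof.
  intros [w [Hw Huv]] Hv; eapply littleo_ext;
    [apply (littleo_mul_bounded E w v Hw Hv)|].
  generalize Huv; apply filter_imp; intros n ->; ring.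
Qed.

Lemma rel_approx_eventually_pos (E : R) (u v : nat -> R) : 0 <= E ->
  rel_approx E u v -> eventually (fun n => 0 < v n) -> eventually (fun n => 0 < u n).
Proof.
  intros HE [w [Hw Huv]] Hv.
  assert (Hsmall := littleo_vanish E w HE Hw (1 / 2) ltac:(lra)).
  generalize (filter_and _ _ Hsmall (filter_and _ _ Huv Hv)).
  apply filter_imp; intros n [Hw_n [-> Hv_n]]; apply Rabs_le_between in Hw_n.
  apply Rmult_lt_0_compat; lra.
Qed.

(** * One application of L *)

Lemma Lop_SS (b : nat -> R) (n : nat) : Lop b n = b n * b (S (S n)) - b (S n) ^ 2.
Proof. unfold Lop; do 2 f_equal; f_equal; lia. Qed.

Lemma R2_SS (b : nat -> R) (n : nat) : R2 b n = b n * b (S (S n)) / b (S n) ^ 2.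
Proof. unfold R2; do 2 f_equal; [f_equal|f_equal; f_equal]; lia. Qed.

Lemma has_lead_Lop (c a : R) (l : nat -> R) :
  has_lead c a l -> has_lead (c * c * a) (2 * a + 2) (Lop l).
Proof.
  intros Hl; set (D := fun n => l (S n) - l n).
  assert (HD : has_lead (- (c * a)) (a + 1) D) by apply has_lead_diff, Hl.
  assert (HDD := has_lead_diff _ _ _ HD).
  assert (H1 := has_lead_mul _ _ _ _ _ _ Hl HDD).
  assert (H2 := has_lead_scal _ _ (-1) _ (has_lead_mul _ _ _ _ _ _ HD HD)).
  replace (a + (a + 1 + 1)) with (2 * a + 2) in H1 by ring.
  replace (a + 1 + (a + 1)) with (2 * a + 2) in H2 by ring.
  assert (H := has_lead_add _ _ _ _ _ H1 H2).
  replace (c * - (- (c * a) * (a + 1)) + -1 * (- (c * a) * - (c * a)))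
    with (c * c * a) in H by ring.
  (* [L l = l Δ²l - (Δl)^2], hence the exponent [2 a + 2]. *)
  eapply has_lead_ext; [exact H|].
  apply filter_forall; intros n; rewrite Lop_SS; unfold D; ring.
Qed.

Lemma has_lead_R2_sub1 (c a : R) (l : nat -> R) : has_lead c a l -> 0 < c ->
  has_lead a 2 (fun n => R2 l n - 1).
Proof.
  intros Hl Hc.
  assert (Hsq : has_lead (c * c) (a + a) (fun n => l (S n) * l (S n)))
    by (apply has_lead_mul; apply has_lead_shift, Hl).
  assert (H := has_lead_mul _ _ _ _ _ _ (has_lead_Lop _ _ _ Hl)
                 (has_lead_inv _ _ _ Hsq ltac:(nra))).
  replace (2 * a + 2 + - (a + a)) with 2 in H by ring.
  replace (c * c * a * / (c * c)) with a in H by (field; lra).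
  eapply has_lead_ext; [exact H|].
  generalize (eventually_shift _ (has_lead_eventually_ge _ _ _ Hl Hc)).
  apply filter_imp; intros n Hn; pose proof (npow_gt0 a (S n)).
  rewrite Lop_SS, R2_SS; field; nra.
Qed.

Lemma has_lead_sq_succ_sub1 (c a : R) (l : nat -> R) : has_lead c a l -> 0 < a ->
  has_lead (2 * c) a (fun n => (1 + l (S n)) ^ 2 - 1).
Proof.
  intros Hl Ha; pose proof (has_lead_shift _ _ _ Hl) as Hs.
  apply has_lead_ext with (fun n => 2 * l (S n) + l (S n) * l (S n));
    [|apply filter_forall; intros; ring].
  apply (has_lead_add_higher _ _ (a + a)); [apply has_lead_scal, Hs| |lra].
  apply has_expansion_mul; apply (has_lead_expansion _ _ _ Hs).
Qed.

Lemma has_lead_R2_model (c a : R) (l : nat -> R) : has_lead c a l -> 0 < c -> 0 < a ->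
  exists c', 0 < c' /\
    has_lead c' (Rmin a 2) (fun n => (1 + l (S n)) ^ 2 * R2 l n - 1).
Proof.
  intros Hl Hc Ha.
  pose proof (has_lead_sq_succ_sub1 _ _ _ Hl Ha) as HA.
  pose proof (has_lead_R2_sub1 _ _ _ Hl Hc) as HQ.
  destruct (has_lead_add_min _ _ _ _ _ _ HA HQ ltac:(lra) Ha) as [c' [Hc' HAQ]].
  exists c'; split; [exact Hc'|].
  apply has_lead_ext with
    (fun n => ((1 + l (S n)) ^ 2 - 1 + (R2 l n - 1))
              + ((1 + l (S n)) ^ 2 - 1) * (R2 l n - 1));
    [|apply filter_forall; intros; ring].
  apply (has_lead_add_higher _ _ (a + 2)); [exact HAQ| |pose proof (Rmin_l a 2); lra].
  apply has_expansion_mul; eapply has_lead_expansion; eassumption.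
Qed.

Lemma rel_approx_R2_model (E : R) (x l : nat -> R) : 0 <= E ->
  littleo E (fun n => x n - l n) -> rel_approx E x l ->
  eventually (fun n => Rabs (l n) <= 1 / 2) ->
  rel_approx E (fun n => (1 + x (S n)) ^ 2 * R2 x n) (fun n => (1 + l (S n)) ^ 2 * R2 l n).
Proof.
  intros HE Hdiff Hxl Hsmall.
  assert (H1 : rel_approx E (fun n => 1 + x (S n)) (fun n => 1 + l (S n))).
  { replace E with (E - 0) by ring; apply (rel_approx_of_littleo _ _ (1 / 2)); [| lra |].
    - eapply littleo_ext; [apply (littleo_shift _ _ HE Hdiff)|].
      apply filter_forall; intros; ring.
    - generalize (eventually_shift _ Hsmall); apply filter_imp; intros n Hn.
      apply Rabs_le_between in Hn; rewrite npow_0, Rabs_pos_eq; lra. }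
  assert (Hx1 := rel_approx_shift _ _ _ HE Hxl).
  assert (Hx2 := rel_approx_shift _ _ _ HE Hx1).
  assert (Hsq := rel_approx_mul _ _ _ _ _ HE H1 H1).
  assert (HR2 := rel_approx_mul _ _ _ _ _ HE (rel_approx_mul _ _ _ _ _ HE Hxl Hx2)
                   (rel_approx_inv _ _ _ HE (rel_approx_mul _ _ _ _ _ HE Hx1 Hx1))).
  eapply rel_approx_ext; [apply (rel_approx_mul _ _ _ _ _ HE Hsq HR2)| |];
    apply filter_forall; intros n; rewrite R2_SS, <- !Rsqr_pow2; reflexivity.
Qed.

Lemma Lop_eq_R2 (b : nat -> R) (n : nat) :
  0 < b (S n) -> Lop b n = b (S n) ^ 2 * (R2 b n - 1).
Proof. intros; rewrite Lop_SS, R2_SS; field; lra. Qed.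

Lemma R2_Lop (b : nat -> R) (n : nat) :
  0 < b (S n) -> 0 < b (S (S n)) -> 0 < b (S (S (S n))) -> 0 < R2 b (S n) - 1 ->
  R2 (Lop b) n = (1 + (R2 b (S n) - 1)) ^ 2 * R2 (fun k => R2 b k - 1) n.
Proof.
  intros H1 H2 H3 Hx.
  rewrite (R2_SS (Lop b)), (R2_SS (fun k => R2 b k - 1)), !Lop_eq_R2 by assumption.
  replace (1 + (R2 b (S n) - 1)) with (b (S n) * b (S (S (S n))) / b (S (S n)) ^ 2)
    by (rewrite R2_SS; ring).
  field; repeat split; lra.
Qed.

Definition R2_puiseux (b : nat -> R) (a B : R) : Prop :=
  eventually (fun n => 0 < b n) /\ 0 < a /\
  exists c l, 0 < c /\ has_lead c a l /\ littleo B (fun n => R2 b n - 1 - l n).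

Lemma R2_puiseux_Lop (b : nat -> R) (a B : R) : R2_puiseux b a B -> a <= B ->
  eventually (fun n => 0 < Lop b n) /\ R2_puiseux (Lop b) (Rmin a 2) (B - a).
Proof.
  intros [Hb [Ha [c [l [Hc [Hl Ho]]]]]] HaB.
  set (x := fun n => R2 b n - 1).
  assert (HE : 0 <= B - a) by lra.
  assert (Hl_ge := has_lead_eventually_ge _ _ _ Hl Hc).
  assert (Hxl : rel_approx (B - a) x l).
  { apply (rel_approx_of_littleo _ _ (c / 2)); [exact Ho|lra|].
    generalize Hl_ge; apply filter_imp; intros n Hn.
    eapply Rle_trans; [exact Hn|apply Rle_abs]. }
  assert (Hx_pos : eventually (fun n => 0 < x n)).
  { apply (rel_approx_eventually_pos _ _ _ HE Hxl).
    generalize Hl_ge; apply filter_imp; intros n Hn; pose proof (npow_gt0 a n); nra. }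
  assert (HL_pos : eventually (fun n => 0 < Lop b n)).
  { generalize (filter_and _ _ (eventually_shift _ Hb) Hx_pos); apply filter_imp.
    intros n [Hbn Hxn]; rewrite Lop_eq_R2 by exact Hbn.
    apply Rmult_lt_0_compat; [apply pow_lt|]; assumption. }
  destruct (has_lead_R2_model _ _ _ Hl Hc Ha) as [c' [Hc' Hmodel]].
  split; [exact HL_pos|split; [exact HL_pos|split; [apply Rmin_glb_lt; lra|]]].
  exists c', (fun n => (1 + l (S n)) ^ 2 * R2 l n - 1); split; [exact Hc'|split; [exact Hmodel|]].
  assert (Happrox := rel_approx_R2_model _ _ _ HE (littleo_mono B (B - a) _ Ho ltac:(lra)) Hxl
                       (has_lead_vanish _ _ _ Hl Ha (1 / 2) ltac:(lra))).
  eapply littleo_ext; [apply (littleo_of_rel_approx _ _ _ Happrox)|].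
  - exists 2; generalize (has_lead_vanish _ _ _ Hmodel ltac:(apply Rmin_glb_lt; lra) 1 Rlt_0_1).
    apply filter_imp; intros n Hn; apply Rabs_le_between in Hn; apply Rabs_le; lra.
  - generalize (filter_and _ _ (eventually_shift _ Hb) (filter_and _ _
      (eventually_shift _ (eventually_shift _ Hb))
      (filter_and _ _ (eventually_shift _ (eventually_shift _ (eventually_shift _ Hb)))
                      (eventually_shift _ Hx_pos)))).
    apply filter_imp; intros n [H1 [H2 [H3 Hx1]]].
    rewrite R2_Lop by assumption; ring.
Qed.

(** * Iteration *)

(* [L] maps the exponents (a, B) of [R2_puiseux] to (min a 2, B - a). *)
Fixpoint admissible_steps (K : nat) (a B : R) : Prop :=
  match K with
  | O => True
  | S K' => a <= B /\ admissible_steps K' (Rmin a 2) (B - a)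
  end.

Lemma Liter_Lop (k : nat) (b : nat -> R) : Liter k (Lop b) = Liter (S k) b.
Proof. induction k as [|k IH]; simpl; [reflexivity|rewrite IH; reflexivity]. Qed.

Lemma asymp_r_log_convex_S (K : nat) (b : nat -> R) :
  eventually (fun n => 0 < Lop b n) -> asymp_r_log_convex K (Lop b) ->
  asymp_r_log_convex (S K) b.
Proof.
  intros [N0 H0] [N HN]; exists (max N0 N); intros [|[|k]] n Hk Hn; [lia| |].
  - left; apply H0; lia.
  - rewrite <- Liter_Lop; apply HN; lia.
Qed.

Lemma R2_puiseux_log_convex (K : nat) : forall (b : nat -> R) (a B : R),
  R2_puiseux b a B -> admissible_steps K a B -> asymp_r_log_convex K b.
Proof.
  induction K as [|K IH]; intros b a B Hb HK.
  - exists 0%nat; intros; lia.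
  - destruct HK as [HaB HK]; destruct (R2_puiseux_Lop _ _ _ Hb HaB) as [Hpos HL].
    exact (asymp_r_log_convex_S _ _ Hpos (IH _ _ _ HL HK)).
Qed.

Lemma admissible_steps_le2 (K : nat) : forall a B : R,
  0 < a <= 2 -> INR K * a <= B -> admissible_steps K a B.
Proof.
  induction K as [|K IH]; intros a B Ha HK; [exact I|].
  rewrite S_INR in HK; pose proof (pos_INR K); simpl.
  rewrite Rmin_left by lra; split; [nra|apply IH; lra].
Qed.

Lemma INR_floor_le (x : R) : 0 <= x -> INR (Z.to_nat (Rfloor x)) <= x.
Proof.
  intros Hx; destruct (base_Int_part x) as [Hfl Hgt]; unfold Rfloor.
  assert ((-1 < Int_part x)%Z) by (apply lt_IZR; lra).
  rewrite INR_IZR_INZ, Z2Nat.id by lia; exact Hfl.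
Qed.

Lemma r_of_admissible (alpha beta : R) :
  0 < alpha <= beta -> admissible_steps (r_of alpha beta) alpha beta.
Proof.
  intros Hab; unfold r_of; destruct (Rlt_dec alpha 2) as [Hlt|Hge].
  - apply admissible_steps_le2; [lra|].
    assert (H : INR (Z.to_nat (Rfloor (beta / alpha))) <= beta / alpha)
      by (apply INR_floor_le, Rdiv_le_0_compat; lra).
    apply (Rmult_le_compat_r alpha) in H; [|lra].
    replace (beta / alpha * alpha) with beta in H by (field; lra); exact H.
  - rewrite Nat.add_1_r; simpl; rewrite Rmin_right by lra; split; [lra|].
    apply admissible_steps_le2; [lra|].
    assert (INR (Z.to_nat (Rfloor ((beta - alpha) / 2))) <= (beta - alpha) / 2)
      by (apply INR_floor_le; lra); lra.
Qed.

Lemma has_lead_puiseux_sum (m : nat) (alph coef : nat -> R) : (1 <= m)%nat ->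
  (forall i, (1 <= i)%nat -> (i < m)%nat -> alph i < alph (S i)) ->
  has_lead (coef 1%nat) (alph 1%nat)
    (fun n => sum_n_m (fun i => coef i * npow (alph i) n) 1 m).
Proof.
  intros Hm Hinc.
  apply has_lead_ext with (fun n => coef 1%nat * npow (alph 1%nat) n
                                    + sum_n_m (fun i => coef i * npow (alph i) n) 2 m);
    [|apply filter_forall; intros n; rewrite (sum_Sn_m _ 1 m) by exact Hm; reflexivity].
  destruct (le_lt_dec 2 m) as [Hm2|Hm1].
  - apply (has_lead_add_higher _ _ (alph 2%nat)); [apply has_lead_monomial| |apply Hinc; lia].
    apply has_expansion_sum; intros i Hi.
    apply has_expansion_mono with (alph i); [apply has_expansion_scal, has_expansion_npow|].
    induction i as [|i IH]; [lia|].
    destruct (Nat.eq_dec i 1) as [->|Hi1]; [lra|].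
    specialize (IH ltac:(lia)); specialize (Hinc i ltac:(lia) ltac:(lia)); lra.
  - apply (has_lead_add_higher _ _ (alph 1%nat + 1)); [apply has_lead_monomial| |lra].
    eapply has_expansion_ext; [apply has_expansion_0|].
    apply filter_forall; intros; rewrite sum_n_m_zero by lia; reflexivity.
Qed.

Theorem mainTheorem2 (a : nat -> R) (c alpha beta : R)
  (Ha : forall n : nat, 0 < a n)
  (Hc : 0 < c) (Halpha : 0 < alpha) (Hab : alpha <= beta)
  (Hpuiseux : exists (m : nat) (alph coef : nat -> R),
      (1 <= m)%nat /\ alph 1%nat = alpha /\ coef 1%nat = c /\
      (forall i : nat, (1 <= i)%nat -> (i < m)%nat -> alph i < alph (S i)) /\
      is_lim_seq (fun n : nat =>
          Rpower (INR n) beta *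
          (R2 a n - 1 - sum_n_m (fun i => coef i * Rpower (INR n) (- alph i)) 1 m))
        0) :
  asymp_r_log_convex (r_of alpha beta) a.
Proof.
  destruct Hpuiseux as [m [alph [coef [Hm [Halph1 [Hcoef1 [Hinc Hlim]]]]]]].
  apply (R2_puiseux_log_convex _ a alpha beta); [|apply r_of_admissible; lra].
  split; [apply filter_forall, Ha|split; [exact Halpha|]].
  exists c, (fun n => sum_n_m (fun i => coef i * npow (alph i) n) 1 m).
  split; [exact Hc|split].
  - rewrite <- Halph1, <- Hcoef1; apply has_lead_puiseux_sum; assumption.
  - apply littleo_of_lim, Hlim.
Qed.
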